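(* Let $N=2$, $n\ge1$, $\rho\in\{0,1\}$, with homogeneous nonzero parameters $a,b,c,d,\kappa$ and $a^nc^n+(-1)^\rho\kappa^n\ne0$. Let $t(\lambda)$ be a polynomial of degree $\le n$ with $t(0)=1+(-1)^\rho b^nd^n/\kappa^n$ and leading coefficient (of $\lambda^n$) $a^nc^n+(-1)^\rho\kappa^n$, satisfying $$t(\lambda)t(-\lambda)=(-1)^\rho\big(z(\lambda)+z(-\lambda)\big)+\operatorname{tr}\big(\mathcal L(\lambda^2)^n\big),$$ where $z(\lambda)=\big((b+a\kappa\lambda)(d-c\kappa\lambda)/\kappa\big)^n$ and $\mathcal L(\Lambda)=\begin{pmatrix}1-\kappa^2\Lambda&-\Lambda(a^2-b^2)\\ c^2-d^2&b^2d^2/\kappa^2-\Lambda a^2c^2\end{pmatrix}$. Then $$t(\lambda)t(-\lambda)=(-1)^n\prod_{q}\big(A(q)\lambda^2-C(q)+2iB(q)\lambda\big),$$ and, assuming all $A(q)\ne0$, $$t(\lambda)=\big(a^nc^n+(-1)^\rho\kappa^n\big)\prod_q(\lambda+\sigma_q\lambda_q)$$ for some signs $\sigma_q\in\{\pm1\}$ with $\prod_q\sigma_q=(-1)^\rho$ (i.e. the number of minus signs is even for $\rho=0$ and odd for $\rho=1$). Here $q$ runs over $\{\pi(2s+1-\rho)/n: s=0,\dots,n-1\}$.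
   Context: $A(q)=a^2c^2-2\kappa ac\cos q+\kappa^2$, $B(q)=(ad-bc)\sin q$, $C(q)=1-2\frac{bd}{\kappa}\cos q+\frac{b^2d^2}{\kappa^2}$, $D(q)=A(q)C(q)-B(q)^2$, and $\lambda_q=(\sqrt{D(q)}-iB(q))/A(q)$, where the square roots are chosen so that $\sqrt{D(q)}=\sqrt{D(-q)}$ for $q\not\equiv0,\pi\pmod{2\pi}$, $\sqrt{D(0)}=(\kappa-ac)(1-bd/\kappa)$ and $\sqrt{D(\pi)}=(\kappa+ac)(1+bd/\kappa)$. (Angles are taken modulo $2\pi$.) *)

From HB Require Import structures.
From mathcomp Require Import all_boot all_order all_algebra.
From mathcomp Require Import reals trigo.
From mathcomp.real_closed Require Export complex.
Set Implicit Arguments. Unset Strict Implicit. Unset Printing Implicit Defensive.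
Import Order.TTheory GRing.Theory Num.Theory.
Local Open Scope ring_scope.
Local Open Scope complex_scope.

Section Defs.
Variable R : realType.
Local Notation C := R[i].

Definition qnum (rho : bool) (s : nat) : nat := (2 * s + 1 - rho)%N.

Definition qang (n : nat) (rho : bool) (s : nat) : R :=
  pi * (qnum rho s)%:R / n%:R.

Definition Acoef (a c k : C) (q : R) : C :=
  a ^+ 2 * c ^+ 2 - 2%:R * k * a * c * (cos q)%:C + k ^+ 2.

Definition Bcoef (a b c d : C) (q : R) : C :=
  (a * d - b * c) * (sin q)%:C.

Definition Ccoef (b d k : C) (q : R) : C :=
  1 - 2%:R * (b * d / k) * (cos q)%:C + b ^+ 2 * d ^+ 2 / k ^+ 2.

Definition Dcoef (a b c d k : C) (q : R) : C :=
  Acoef a c k q * Ccoef b d k q - Bcoef a b c d q ^+ 2.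

(* lambda_q = (sqrt D(q) - i B(q)) / A(q), given the chosen square root sD *)
Definition lam (a b c d k : C) (q : R) (sD : C) : C :=
  (sD - 'i * Bcoef a b c d q) / Acoef a c k q.

Definition zfun (n : nat) (a b c d k : C) (x : C) : C :=
  ((b + a * k * x) * (d - c * k * x) / k) ^+ n.

Definition Lmat (a b c d k : C) (L : C) : 'M[C]_2 :=
  \matrix_(i < 2, j < 2)
    if (i == 0 :> nat) then
      (if (j == 0 :> nat) then 1 - k ^+ 2 * L else - (L * (a ^+ 2 - b ^+ 2)))
    else
      (if (j == 0 :> nat) then c ^+ 2 - d ^+ 2
       else b ^+ 2 * d ^+ 2 / k ^+ 2 - L * a ^+ 2 * c ^+ 2).

End Defs.
Arguments qang {R}.

From HB Require Import structures.
From mathcomp Require Import all_boot all_order all_algebra.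
From mathcomp Require Import reals trigo.
From mathcomp.real_closed Require Import complex.
From mathcomp Require Import ring lra zify.
Import Order.TTheory GRing.Theory Num.Theory.
Local Open Scope ring_scope.
Local Open Scope complex_scope.

(* Put w_s = cis q_s: these are the n roots of w^n = -(-1)^rho, so that
   prod_s (mu - v w_s) = mu^n + (-1)^rho v^n, and likewise for the conjugates.
   Each quadratic factor A x^2 - C + 2iBx equals z1 w_s + z2 w_s^* - T, where
   z1^n = z(x), z2^n = z(-x), and T and z1 z2 are the trace and determinant of
   L(x^2).  Splitting T = m1 + m2 with m1 m2 = z1 z2 (the eigenvalues of L(x^2)),
   the factor times z1 w_s is (m1 - z1 w_s)(m2 - z1 w_s), and the product over s
   becomes (-1)^rho (z(x) + z(-x)) + m1^n + m2^n up to the sign (-1)^n.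
   For the factorisation of t, pair s with the index s' such that q_s' = -q_s:
   the s-th factor is A_s (x - lambda_s)(x + lambda_s'), hence
   t(x) t(-x) = lead^2 prod_s (lambda_s^2 - x^2) and the roots of t are the
   +-lambda_s.  The product of the signs is read off from t(0): lambda_s lambda_s'
   and nu_s nu_s', where nu_s = (1 - (bd/k) w_s) / (ac - k w_s), both equal C/A,
   while prod_s nu_s = t(0)/lead; the self-paired indices (q_s = 0 or pi) carry
   the extra sign (-1)^rho.  When t(0) = 0 some lambda_s vanishes and its sign is
   free. *)

Lemma prod_sub_mul_prim_root_expr {F : fieldType} {n : nat} {z : F} :
  n.-primitive_root z ->
  forall mu v : F, \prod_(i < n) (mu - v * z ^+ i) = mu ^+ n - v ^+ n.
Proof.
move=> z_prim mu v; have n_gt0 := prim_order_gt0 z_prim.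
have [->|v0] := eqVneq v 0.
  under eq_bigr do rewrite mul0r subr0.
  by rewrite prodr_const card_ord expr0n gtn_eqF // subr0.
have := congr1 (horner^~ (mu / v)) (factor_Xn_sub_1 z_prim).
rewrite horner_prod big_mkord hornerE => factorE.
transitivity (\prod_(i < n) (v * (mu / v - z ^+ i))).
  by apply: eq_bigr => i _; rewrite mulrBr mulrCA divff // mulr1.
rewrite big_split /= prodr_const card_ord.
under eq_bigr do rewrite -hornerXsubC.
rewrite factorE hornerXn hornerN hornerC expr_div_n mulrBr mulrCA.
by rewrite divff ?mulr1 // expf_neq0.
Qed.

Lemma exists_sum_prod {F : numClosedFieldType} (sum prod : F) :
  exists m1 m2 : F, m1 + m2 = sum /\ m1 * m2 = prod.
Proof.
pose r := sqrtC (sum ^+ 2 - 4%:R * prod).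
have r2 : r ^+ 2 = sum ^+ 2 - 4%:R * prod by rewrite sqrtCK.
have two0 : 2%:R != 0 :> F by rewrite pnatr_eq0.
exists ((sum + r) / 2%:R), ((sum - r) / 2%:R); split; first by field.
transitivity ((sum ^+ 2 - r ^+ 2) / 4%:R); first by field.
by rewrite r2; field.
Qed.

Lemma mxtrace_expn_2 {F : comNzRingType} {M : 'M[F]_2} {m1 m2 : F} :
  m1 + m2 = M 0 0 + M 1 1 -> m1 * m2 = M 0 0 * M 1 1 - M 0 1 * M 1 0 ->
  forall m, \tr (M ^+ m) = m1 ^+ m + m2 ^+ m.
Proof.
move=> sumE prodE.
have sum2 (G : 'I_2 -> F) : \sum_(i < 2) G i = G 0 + G 1.
  by rewrite !big_ord_recl big_ord0 addr0; congr (_ + G _); apply/val_inj.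
have ord2 (i : 'I_2) : i = 0 \/ i = 1.
  by case: i => [[|[|//]] i_lt2]; [left|right]; apply/val_inj.
(* Cayley--Hamilton for 2 x 2 matrices *)
have M2 : M ^+ 2 = (m1 + m2) *: M - (m1 * m2) *: 1.
  rewrite sumE prodE; apply/matrixP => i j; rewrite expr2 -mulmxE !mxE sum2.
  by case: (ord2 i) => ->; case: (ord2 j) => ->; rewrite ?mxE /=; ring.
suff tr_pair m : \tr (M ^+ m) = m1 ^+ m + m2 ^+ m /\
                 \tr (M ^+ m.+1) = m1 ^+ m.+1 + m2 ^+ m.+1.
  by move=> m; case: (tr_pair m).
elim: m => [|m [IHm IHm1]].
  by rewrite !expr0 !expr1 mxtrace1 sumE /mxtrace sum2.
split=> //; rewrite -[m.+2]addn2 exprD M2 mulrBr -!scalerAr mulr1 mxtraceD raddfN /=.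
by rewrite !mxtraceZ -exprSr IHm IHm1 addn2 !exprS; ring.
Qed.

Lemma prod_involution {T : comPzRingType} {n : nat} {p : 'I_n -> 'I_n}
    {f g e : 'I_n -> T} :
  involutive p ->
  (forall s, f s * f (p s) = g s * g (p s)) ->
  (forall s, p s = s -> f s = e s * g s) ->
  \prod_(s < n) f s = \prod_(s < n | p s == s) e s * \prod_(s < n) g s.
Proof.
move=> pK pairE fixedE.
have split_orbits (h : 'I_n -> T) : \prod_(s < n) h s =
    \prod_(s < n | (s < p s)%N) (h s * h (p s)) * \prod_(s < n | p s == s) h s.
  rewrite (bigID (fun s : 'I_n => (s < p s)%N)) /=.
  rewrite (bigID (fun s : 'I_n => p s == s) (fun s => ~~ (s < p s)%N)) /=.
  have -> : \prod_(s < n | ~~ (s < p s)%N && (p s == s)) h s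
            = \prod_(s < n | p s == s) h s.
    by apply: eq_bigl => s; case: eqP => [->|]; rewrite ?ltnn ?andbT ?andbF.
  have -> : \prod_(s < n | ~~ (s < p s)%N && (p s != s)) h s
            = \prod_(s < n | (p s < s)%N) h s.
    by apply: eq_bigl => s; rewrite -leqNgt andbC -val_eqE -ltn_neqAle.
  rewrite [\prod_(s < n | (p s < s)%N) _](reindex_inj (inv_inj pK)) /=.
  have -> : \prod_(s < n | (p (p s) < p s)%N) h (p s)
            = \prod_(s < n | (s < p s)%N) h (p s).
    by apply: eq_bigl => s; rewrite pK.
  by rewrite big_split /=; ring.
rewrite split_orbits (split_orbits g) mulrCA -big_split /=; congr (_ * _).
  by apply: eq_bigr => s _; rewrite pairE.
by apply: eq_bigr => s /eqP/fixedE.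
Qed.

Lemma eq_poly_horner (F : numDomainType) (p q : {poly F}) :
  (forall x, p.[x] = q.[x]) -> p = q.
Proof.
move=> pqE; apply/eqP; rewrite -subr_eq0; apply/eqP.
apply: (@roots_geq_poly_eq0 _ _ [seq i%:R | i <- iota 0 (size (p - q))]).
- by apply/allP => x _; rewrite /root hornerD hornerN pqE subrr.
- by rewrite map_inj_uniq ?iota_uniq // => i j /eqP; rewrite eqr_nat => /eqP.
- by rewrite size_map size_iota.
Qed.

Lemma perm_sqr_signs (F : idomainType) (I : eqType) (f : I -> F) (js : seq I)
    (rs : seq F) :
  uniq js -> perm_eq [seq r ^+ 2 | r <- rs] [seq f j ^+ 2 | j <- js] ->
  exists sg : I -> bool, perm_eq rs [seq (-1) ^+ sg j * f j | j <- js].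
Proof.
elim: js rs => [|j js IHjs] rs /=.
  move=> _ /perm_size; rewrite size_map => /eqP; rewrite size_eq0 => /eqP ->.
  by exists (fun=> false).
case/andP => j_notin_js uniq_js sqr_perm.
have /mapP[r r_in_rs rE] : f j ^+ 2 \in [seq r ^+ 2 | r <- rs].
  by rewrite (perm_mem sqr_perm) mem_head.
have rs_rem := perm_to_rem r_in_rs.
have sqr_perm_rem : perm_eq [seq x ^+ 2 | x <- rem r rs] [seq f i ^+ 2 | i <- js].
  have := perm_map (fun x => x ^+ 2) rs_rem; rewrite /= -rE perm_sym => rs_sqr.
  by rewrite -(perm_cons (f j ^+ 2)); apply: perm_trans rs_sqr sqr_perm.
have [sg sgE] := IHjs _ uniq_js sqr_perm_rem.
exists (fun i => if i == j then r != f j else sg i); rewrite /= eqxx.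
have -> : [seq (-1) ^+ (if i == j then r != f j else sg i) * f i | i <- js]
        = [seq (-1) ^+ sg i * f i | i <- js].
  apply/eq_in_map => i i_in_js; case: eqP => // i_eq_j.
  by move: j_notin_js; rewrite -i_eq_j i_in_js.
have -> : (-1) ^+ (r != f j) * f j = r.
  have [-> | r_neq] := eqVneq r (f j); first by rewrite mul1r.
  move/eqP: rE; rewrite eq_sym eqf_sqr (negbTE r_neq) /= => /eqP->.
  by rewrite mulN1r.
by apply: perm_trans rs_rem _; rewrite perm_cons.
Qed.

Lemma prodrN_ord (T : pzRingType) (n : nat) (f : 'I_n -> T) :
  \prod_(i < n) - f i = (-1) ^+ n * \prod_(i < n) f i.
Proof. by rewrite (prodrN 'I_n) card_ord. Qed.

Lemma exists_signed_factorization {C : numClosedFieldType} {n : nat} {t : {poly C}}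
    {mu : 'I_n -> C} :
  size t = n.+1 ->
  (forall x, t.[x] * t.[- x] = lead_coef t ^+ 2 * \prod_(s < n) (mu s ^+ 2 - x ^+ 2)) ->
  exists sg : 'I_n -> bool,
    forall x, t.[x] = lead_coef t * \prod_(s < n) (x + (-1) ^+ sg s * mu s).
Proof.
move=> size_t ttE; set l := lead_coef t.
have l_neq0 : l != 0 by rewrite lead_coef_eq0 -size_poly_eq0 size_t.
have [rs tE] := closed_field_poly_normal t.
have size_rs : size rs = n.
  by have := congr1 (fun p : {poly C} => size p) tE; rewrite size_scale // size_prod_XsubC size_t => -[].
pose r (i : 'I_n) := rs`_i.
have t_horner x : t.[x] = l * \prod_(i < n) (x - r i).
  rewrite {1}tE hornerZ horner_prod (big_nth 0) size_rs big_mkord.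
  by congr (_ * _); apply: eq_bigr => i _; rewrite hornerXsubC.
have sqr_rootsE x : \prod_(i < n) (x ^+ 2 - r i ^+ 2) = \prod_(s < n) (x ^+ 2 - mu s ^+ 2).
  have factorE i : (x - r i) * (- x - r i) = - (x ^+ 2 - r i ^+ 2) by ring.
  have subE s : mu s ^+ 2 - x ^+ 2 = - (x ^+ 2 - mu s ^+ 2) by rewrite opprB.
  have := ttE x; rewrite !t_horner mulrACA -big_split /= -expr2.
  rewrite (eq_bigr _ (fun i _ => factorE i)) (eq_bigr _ (fun s _ => subE s)).
  have sign_neq0 : (-1) ^+ n != 0 :> C by rewrite signr_eq0.
  by rewrite !prodrN_ord => /(mulfI (expf_neq0 2 l_neq0))/(mulfI sign_neq0).
have polyE : \prod_(i < n) ('X - (r i ^+ 2)%:P) = \prod_(s < n) ('X - (mu s ^+ 2)%:P).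
  apply: eq_poly_horner => y; rewrite !horner_prod.
  under eq_bigr do rewrite hornerXsubC; under [in RHS]eq_bigr do rewrite hornerXsubC.
  by have := sqr_rootsE (sqrtC y); rewrite sqrtCK.
have [sg sgE] : exists sg : 'I_n -> bool, perm_eq [seq r i | i <- index_enum 'I_n]
    [seq (-1) ^+ sg s * mu s | s <- index_enum 'I_n].
  apply: perm_sqr_signs (index_enum_uniq _) _.
  by rewrite -map_comp; apply: prod_XsubC_eq; rewrite !big_map; exact: polyE.
exists (fun s => ~~ sg s) => x; rewrite t_horner; congr (_ * _).
rewrite -(big_map r xpredT (fun z => x - z)) (perm_big _ sgE) big_map.
by apply: eq_bigr => s _; rewrite signrN mulNr.
Qed.

Lemma exists_signs_prod {F : idomainType} {n : nat} {mu : 'I_n -> F}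
    {sg : 'I_n -> bool} {e : bool} :
  \prod_(s < n) (-1) ^+ sg s * \prod_(s < n) mu s = (-1) ^+ e * \prod_(s < n) mu s ->
  exists sg' : 'I_n -> bool, \prod_(s < n) (-1) ^+ sg' s = (-1) ^+ e :> F /\
    forall s, (-1) ^+ sg' s * mu s = (-1) ^+ sg s * mu s.
Proof.
move=> prodE; set P := \prod_(s < n) (-1) ^+ sg s in prodE *.
have [P_e | P_neq_e] := eqVneq P ((-1) ^+ e); first by exists sg.
have /prodf_eq0[s0 _ /eqP mu0] : \prod_(s < n) mu s == 0.
  by apply: contraNT P_neq_e => mu_neq0; apply/eqP/(mulIf mu_neq0).
(* flipping the sign in front of the vanishing factor [mu s0] changes nothing *)
exists (fun s => (s == s0) (+) sg s); split => [|s]; last first.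
  by case: eqVneq => [-> | _]; rewrite ?mu0 ?mulr0.
rewrite (eq_bigr _ (fun s _ => signr_addb _ _ _)) big_split /= -/P.
rewrite (bigD1 s0) //= eqxx big1 ?mulr1 => [|s /negbTE-> //].
have [P1 | PN1] : P = 1 \/ P = -1.
  rewrite /P; apply: (big_ind (fun x : F => x = 1 \/ x = -1)) => [|x y|s _].
  - by left.
  - by case=> ->; case=> ->; rewrite ?mulr1 ?mulrN1 ?opprK; [left|right|right|left].
  - by case: (sg s); [right|left].
all: by move: P_neq_e; rewrite ?P1 ?PN1; case: (e); rewrite ?eqxx // mulN1r ?opprK.
Qed.

Section UnitCircle.
Variable R : realType.
Implicit Types x y : R.

Definition cis x : R[i] := cos x +i* sin x.

Lemma cisE x : cis x = (cos x)%:C + 'i * (sin x)%:C.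
Proof. by apply/eqP; rewrite eq_complex /=; simpc. Qed.

Lemma cis0 : cis 0 = 1.
Proof. by apply/eqP; rewrite eq_complex /= cos0 sin0 !eqxx. Qed.

Lemma cisD x y : cis (x + y) = cis x * cis y.
Proof. by apply/eqP; rewrite eq_complex /= cosD sinD; apply/andP; split; apply/eqP; ring. Qed.

Lemma cisMn x m : cis (x *+ m) = cis x ^+ m.
Proof. by elim: m => [|m IH]; rewrite ?mulr0n ?cis0 // mulrS cisD IH exprS. Qed.

Lemma cis_pi : cis pi = -1.
Proof. by apply/eqP; rewrite eq_complex /= cospi sinpi oppr0 !eqxx. Qed.

Lemma conj_cis x : (cis x)^*%R = cis (- x).
Proof. by apply/eqP; rewrite eq_complex /= cosN sinN !eqxx. Qed.

Lemma cis_mul_conj x : cis x * (cis x)^* = 1.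
Proof. by rewrite conj_cis -cisD subrr cis0. Qed.

Lemma cis_add_conj x : cis x + (cis x)^*%R = 2%:R * (cos x)%:C.
Proof. by rewrite conj_cis !cisE cosN sinN raddfN /=; ring. Qed.

Lemma cis_mulr2n_neq1 y : 0 < y < pi -> cis (y *+ 2) != 1.
Proof.
move=> y_gt0_ltpi; apply/negP; rewrite eq_complex /= => /andP[/eqP cos2y /eqP].
rewrite sin_mulr2n => /eqP; rewrite mulrn_eq0 /= mulf_eq0.
rewrite (gt_eqF (sin_gt0_pi y_gt0_ltpi)) orbF => /eqP cosy0.
by move: cos2y; rewrite cos_mulr2n cosy0 expr0n /=; lra.
Qed.

Lemma cis_prim_root {n} : (0 < n)%N -> n.-primitive_root (cis (pi *+ 2 / n%:R)).
Proof.
move=> n_gt0; have n0 : n%:R != 0 :> R by rewrite pnatr_eq0 -lt0n.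
apply/andP; split=> //; apply/forallP => i; rewrite unity_rootE -cisMn.
have [i_n | i_n] := eqVneq i.+1 n.
  apply/eqP; rewrite -[_ *+ i.+1]mulr_natr i_n mulfVK // cisMn cis_pi.
  by rewrite expr2 mulrNN mulr1 eqxx.
have lt_n : (i.+1 < n)%N by move: i_n (ltn_ord i); lia.
apply/eqP; apply: negbTE.
have -> : pi *+ 2 / n%:R *+ i.+1 = (pi * i.+1%:R / n%:R) *+ 2 :> R.
  by rewrite -[LHS]mulr_natr -[RHS]mulr_natr -[pi *+ 2]mulr_natr; field.
apply: cis_mulr2n_neq1; rewrite divr_gt0 ?mulr_gt0 ?pi_gt0 ?ltr0n //=.
by rewrite ltr_pdivrMr ?ltr0n // ltr_pM2l ?pi_gt0 // ltr_nat.
Qed.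

End UnitCircle.
Arguments cis {R}.

Section QRoots.
Variables (R : realType) (n : nat) (rho : bool).
Hypothesis n_gt0 : (0 < n)%N.

Definition qroot (s : 'I_n) : R[i] := cis (qang n rho s).

Lemma qrootE s :
  qroot s = cis (pi * (1 - rho)%:R / n%:R) * cis (pi *+ 2 / n%:R) ^+ s.
Proof.
rewrite /qroot -cisMn -cisD /qang /qnum; congr cis.
have -> : (2 * s + 1 - rho = (1 - rho) + 2 * s)%N by case: rho; lia.
rewrite natrD natrM -[_ *+ s]mulr_natr -[pi *+ 2]mulr_natr.
by field; rewrite pnatr_eq0 -lt0n.
Qed.

Lemma prod_sub_qroot mu v :
  \prod_(s < n) (mu - v * qroot s) = mu ^+ n + (-1) ^+ rho * v ^+ n.
Proof.
have shiftn : cis ((pi : R) * (1 - rho)%:R / n%:R) ^+ n = - (-1) ^+ rho.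
  rewrite -cisMn -[_ *+ n]mulr_natr mulfVK ?pnatr_eq0 -?lt0n //.
  by case: rho; rewrite /= ?mulr0 ?cis0 ?mulr1 ?cis_pi ?opprK.
under eq_bigr do rewrite qrootE mulrA.
rewrite (prod_sub_mul_prim_root_expr (cis_prim_root R n_gt0)) exprMn shiftn.
by rewrite mulrN opprK mulrC.
Qed.

Lemma prod_sub_conj_qroot mu v :
  \prod_(s < n) (mu - v * (qroot s)^*%R) = mu ^+ n + (-1) ^+ rho * v ^+ n.
Proof.
have := congr1 Num.conj (prod_sub_qroot (Num.conj mu) (Num.conj v)).
rewrite rmorph_prod rmorphD rmorphM !rmorphXn rmorphN1 /= !conjCK => <-.
by apply: eq_bigr => s _; rewrite rmorphB rmorphM /= !conjCK.
Qed.

Lemma prod_qroot : \prod_(s < n) qroot s = (-1) ^+ rho * (-1) ^+ n.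
Proof.
have := prod_sub_qroot 0 (-1); rewrite expr0n gtn_eqF // add0r => <-.
by apply: eq_bigr => s _; rewrite sub0r mulN1r opprK.
Qed.

Lemma prod_qroot_trinomial u u' m1 m2 : m1 * m2 = u * u' ->
  (-1) ^+ n * \prod_(s < n) (u * qroot s + u' * (qroot s)^*%R - (m1 + m2))
  = (-1) ^+ rho * (u ^+ n + u' ^+ n) + (m1 ^+ n + m2 ^+ n).
Proof.
move=> m12E.
have n0 : n != 0%N by rewrite -lt0n.
have [u0 | u0] := eqVneq u 0.
  rewrite u0 -prodrN_ord; under eq_bigr do rewrite mul0r add0r opprB.
  rewrite prod_sub_conj_qroot expr0n (negbTE n0) add0r addrC.
  have /eqP := m12E; rewrite u0 mul0r mulf_eq0 => /orP[]/eqP->.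
    by rewrite add0r expr0n (negbTE n0) add0r.
  by rewrite addr0 expr0n (negbTE n0) addr0.
set P := \prod_(s < n) _.
have factorE s : u * ((u * qroot s + u' * (qroot s)^*%R - (m1 + m2)) * qroot s)
               = (m1 - u * qroot s) * (m2 - u * qroot s).
  have := cis_mul_conj R (qang n rho s); rewrite -/(qroot s).
  move: (qroot s) (_^*%R) => w w' ww'.
  transitivity (u * u' * (w * w') + (u * w) ^+ 2 - (m1 + m2) * (u * w)); first by ring.
  by rewrite ww' mulr1 -m12E; ring.
have key : u ^+ n * (P * ((-1) ^+ rho * (-1) ^+ n))
         = u ^+ n * (u ^+ n + u' ^+ n + (-1) ^+ rho * (m1 ^+ n + m2 ^+ n)).
  transitivity (\prod_(s < n)
      (u * ((u * qroot s + u' * (qroot s)^*%R - (m1 + m2)) * qroot s))).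
    by rewrite big_split /= prodr_const card_ord -prod_qroot -big_split.
  under eq_bigr do rewrite factorE.
  rewrite big_split /= !prod_sub_qroot.
  transitivity (m1 ^+ n * m2 ^+ n + (-1) ^+ rho * u ^+ n * (m1 ^+ n + m2 ^+ n)
                + (-1) ^+ rho ^+ 2 * (u ^+ n) ^+ 2); first by ring.
  by rewrite -exprMn m12E exprMn sqrr_sign; ring.
transitivity ((-1) ^+ rho ^+ 2 * ((-1) ^+ n * P)); first by rewrite sqrr_sign mul1r.
transitivity ((-1) ^+ rho * (P * ((-1) ^+ rho * (-1) ^+ n))); first by ring.
by rewrite (mulfI (expf_neq0 n u0) key) mulrDr mulrA -expr2 sqrr_sign mul1r.
Qed.

End QRoots.
Arguments qroot {R n} rho s.

Section TraceIdentity.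
Variables (R : realType) (a b c d k : R[i]).
Hypothesis k_neq0 : k != 0.

Definition zbase (x : R[i]) : R[i] := (b + a * k * x) * (d - c * k * x) / k.

Local Notation L x := (Lmat a b c d k (x ^+ 2)).

Lemma Lmat_det x : L x 0 0 * L x 1 1 - L x 0 1 * L x 1 0 = zbase x * zbase (- x).
Proof. by rewrite /zbase !mxE /=; field. Qed.

Lemma quadratic_cis_eq q x :
  Acoef a c k q * x ^+ 2 - Ccoef b d k q + 2%:R * 'i * Bcoef a b c d q * x
  = zbase x * cis q + zbase (- x) * (cis q)^*%R - (L x 0 0 + L x 1 1).
Proof.
rewrite conj_cis !cisE cosN sinN /Acoef /Bcoef /Ccoef /zbase !mxE /=.
by rewrite raddfN /=; field.
Qed.

Lemma zfun_add_trace_Lmat_eq_prod n (rho : bool) x : (0 < n)%N ->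
  (-1) ^+ rho * (zfun n a b c d k x + zfun n a b c d k (- x))
  + \tr (L x ^+ n) =
  (-1) ^+ n * \prod_(s < n)
    (Acoef a c k (qang n rho s) * x ^+ 2 - Ccoef b d k (qang n rho s)
     + 2%:R * 'i * Bcoef a b c d (qang n rho s) * x).
Proof.
move=> n_gt0.
have [m1 [m2 [sumE prodE]]] :=
  exists_sum_prod (L x 0 0 + L x 1 1) (zbase x * zbase (- x)).
rewrite (mxtrace_expn_2 sumE); last by rewrite prodE Lmat_det.
under eq_bigr do rewrite quadratic_cis_eq -sumE.
by rewrite prod_qroot_trinomial.
Qed.

End TraceIdentity.

Section QPair.
Variables (n : nat) (rho : bool).
Hypothesis n_gt0 : (0 < n)%N.

(* The index [s'] with [q_s' = - q_s] modulo [2 pi]. *)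
Definition qpair (s : 'I_n) : 'I_n := Ordinal (ltn_pmod (n - s - ~~ rho) n_gt0).

Lemma qnum_lt (s : 'I_n) : (qnum rho s < 2 * n)%N.
Proof. by have := ltn_ord s; rewrite /qnum; case: rho => /=; lia. Qed.

Lemma qnum_qpair (s : 'I_n) :
  (qnum rho (qpair s) + qnum rho s = if rho && (s == 0 :> nat) then 0 else 2 * n)%N.
Proof.
have := ltn_ord s; rewrite /qpair /qnum /=; case: rho => /= s_lt.
  have [-> | s_gt0] := posnP s; first by rewrite !subn0 modnn.
  by rewrite modn_small; lia.
by rewrite modn_small; lia.
Qed.

Lemma qpairK : involutive qpair.
Proof.
move=> s; apply/val_inj; have := qnum_qpair (qpair s); have := qnum_qpair s.
have := ltn_ord s; have := ltn_ord (qpair s); have := ltn_ord (qpair (qpair s)).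
rewrite /qnum; case: rho => /=; last by lia.
case: (eqVneq (val s) 0%N); case: (eqVneq (val (qpair s)) 0%N) => /=; lia.
Qed.

Lemma qpair_fixed (s : 'I_n) : qpair s = s -> qnum rho s = 0%N \/ qnum rho s = n.
Proof. by move=> fixed_s; have := qnum_qpair s; rewrite fixed_s; case: ifP => _; lia. Qed.

Lemma dvdn_qnum (s : 'I_n) : ((2 * n) %| qnum rho s)%N = (qnum rho s == 0%N).
Proof.
have := qnum_lt s; case: (posnP (qnum rho s)) => [-> | qnum_gt0] lt2n.
  by rewrite dvdn0.
by apply/negbTE; apply: contraTN lt2n => /(dvdn_leq qnum_gt0); rewrite -leqNgt.
Qed.

Lemma qnum_eq_n_mod (s : 'I_n) : (qnum rho s = n %[mod 2 * n])%N <-> qnum rho s = n.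
Proof. by have lt2n := qnum_lt s; rewrite !modn_small //; lia. Qed.

Variable R : realType.

Lemma qang_qpair (s : 'I_n) :
  qang n rho (qpair s) = (if rho && (s == 0 :> nat) then 0 else pi *+ 2) - qang n rho s :> R.
Proof.
have := qnum_qpair s; have := qnum_lt s; rewrite /qang.
case: ifP => _ sumE lt2n.
  have [-> ->] : qnum rho (qpair s) = 0%N /\ qnum rho s = 0%N by lia.
  by rewrite !mulr0 !mul0r subrr.
have -> : qnum rho (qpair s) = (2 * n - qnum rho s)%N by lia.
rewrite natrB; last by lia.
by rewrite natrM -[pi *+ 2]mulr_natr; field; rewrite pnatr_eq0 -lt0n.
Qed.

Lemma cos_qang_qpair (s : 'I_n) : cos (qang n rho (qpair s)) = cos (qang n rho s) :> R.
Proof.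
rewrite qang_qpair; case: ifP => _; first by rewrite sub0r cosN.
by rewrite cosB cos2pi sin2pi mul1r mul0r addr0.
Qed.

Lemma sin_qang_qpair (s : 'I_n) : sin (qang n rho (qpair s)) = - sin (qang n rho s) :> R.
Proof.
rewrite qang_qpair; case: ifP => _; first by rewrite sub0r sinN.
by rewrite sinB cos2pi sin2pi mul1r mul0r sub0r.
Qed.

Lemma qroot_qpair (s : 'I_n) : qroot rho (qpair s) = (qroot rho s)^*%R :> R[i].
Proof.
rewrite /qroot conj_cis qang_qpair; case: ifP => _; rewrite ?sub0r //.
by rewrite cisD cisMn cis_pi sqrrN expr1n mul1r.
Qed.

End QPair.
Arguments qpair {n} rho n_gt0 s.

Lemma prod_qpair_fixed_sign (T : comPzRingType) n (rho : bool) (n_gt0 : (0 < n)%N) :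
  \prod_(s < n | qpair rho n_gt0 s == s) (-1) ^+ (qnum rho s == 0%N) = (-1) ^+ rho :> T.
Proof.
case: rho; last by rewrite big1 // => s _; rewrite /qnum addn1 subn0.
have zero_fixed : qpair true n_gt0 (Ordinal n_gt0) == Ordinal n_gt0.
  by apply/eqP/val_inj; rewrite /= !subn0 modnn.
rewrite (bigD1 (Ordinal n_gt0)) //= big1 ?mulr1 // => s /andP[_ s_neq0].
suff s_gt0 : (0 < s)%N by rewrite /qnum addnK muln_eq0 /= eqn0Ngt s_gt0.
by rewrite lt0n; apply: contraNneq s_neq0 => s0; apply/eqP/val_inj.
Qed.

Section CoefficientFactors.
Variables (R : realType) (a b c d k : R[i]).
Hypothesis k_neq0 : k != 0.

Lemma Acoef_cis q : Acoef a c k q = (a * c - k * cis q) * (a * c - k * (cis q)^*%R).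
Proof.
transitivity (a ^+ 2 * c ^+ 2 - a * c * k * (cis q + (cis q)^*%R)
              + k ^+ 2 * (cis q * (cis q)^*%R)); last by ring.
by rewrite cis_add_conj cis_mul_conj /Acoef; ring.
Qed.

Lemma Ccoef_cis q :
  Ccoef b d k q = (1 - b * d / k * cis q) * (1 - b * d / k * (cis q)^*%R).
Proof.
transitivity (1 - b * d / k * (cis q + (cis q)^*%R)
              + (b * d / k) ^+ 2 * (cis q * (cis q)^*%R)); last by ring.
by rewrite cis_add_conj cis_mul_conj /Ccoef; field.
Qed.

End CoefficientFactors.

Section QuadraticRoots.
Context {R : realType} {n : nat} {rho : bool} {a b c d k : R[i]} {sD : 'I_n -> R[i]}.
Hypotheses (n_gt0 : (0 < n)%N) (k_neq0 : k != 0).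
Hypothesis sD_sqr : forall s : 'I_n, sD s ^+ 2 = Dcoef a b c d k (qang n rho s).
Hypothesis sD_0 : forall s : 'I_n, ((2 * n) %| qnum rho s)%N ->
  sD s = (k - a * c) * (1 - b * d / k).
Hypothesis sD_pi : forall s : 'I_n, qnum rho s = n %[mod 2 * n] ->
  sD s = (k + a * c) * (1 + b * d / k).
Hypothesis sD_even : forall s s' : 'I_n,
  ~~ ((2 * n) %| qnum rho s)%N -> qnum rho s <> n %[mod 2 * n] ->
  ((2 * n) %| qnum rho s + qnum rho s')%N -> sD s = sD s'.
Hypothesis A_neq0 : forall s : 'I_n, Acoef a c k (qang n rho s) != 0.

Implicit Types (s : 'I_n) (x : R[i]).

Local Notation q s := (@qang R n rho s).
Local Notation w s := (qroot rho s : R[i]).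
Local Notation A s := (Acoef a c k (q s)).
Local Notation B s := (Bcoef a b c d (q s)).
Local Notation C s := (Ccoef b d k (q s)).
Local Notation lambda s := (lam a b c d k (q s) (sD s)).
Local Notation qpair := (qpair rho n_gt0).
Local Notation lead := (a ^+ n * c ^+ n + (-1) ^+ rho * k ^+ n).

Lemma sD_qpair s : sD (qpair s) = sD s.
Proof.
have sumE := qnum_qpair n rho n_gt0 s; have lt2n := qnum_lt n rho n_gt0 (qpair s).
have dvdnE := dvdn_qnum n rho n_gt0; have modE := qnum_eq_n_mod n rho n_gt0.
have [q0 | q_neq0] := eqVneq (qnum rho s) 0%N.
  rewrite (sD_0 s) ?dvdnE ?q0 // sD_0 // dvdnE.
  by apply/eqP; move: sumE; rewrite q0; case: ifP => _; lia.
have [qn | q_neq_n] := eqVneq (qnum rho s) n.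
  rewrite (sD_pi s) ?modE // sD_pi // modE.
  by move: sumE; rewrite qn; case: ifP => _; lia.
symmetry; apply: sD_even.
- by rewrite dvdnE.
- by move/modE/eqP; rewrite (negbTE q_neq_n).
- by rewrite addnC sumE; case: ifP => _; rewrite ?dvdn0 ?dvdnn.
Qed.

Lemma Acoef_qpair s : A (qpair s) = A s.
Proof. by rewrite /Acoef (cos_qang_qpair n rho n_gt0 R). Qed.

Lemma Ccoef_qpair s : C (qpair s) = C s.
Proof. by rewrite /Ccoef (cos_qang_qpair n rho n_gt0 R). Qed.

Lemma Bcoef_qpair s : B (qpair s) = - B s.
Proof. by rewrite /Bcoef (sin_qang_qpair n rho n_gt0 R) raddfN mulrN. Qed.

Lemma lam_qpair s : lambda (qpair s) = (sD s + 'i * B s) / A s.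
Proof. by rewrite /lam sD_qpair Bcoef_qpair Acoef_qpair mulrN opprK. Qed.

Lemma lam_mul_qpair s : lambda s * lambda (qpair s) = C s / A s.
Proof.
have A_s := A_neq0 s; rewrite lam_qpair /lam.
transitivity ((sD s ^+ 2 - 'i ^+ 2 * B s ^+ 2) / A s ^+ 2); first by field.
by rewrite sqr_i sD_sqr /Dcoef; field.
Qed.

Lemma quadratic_lam_factor s x :
  A s * x ^+ 2 - C s + 2%:R * 'i * B s * x
  = A s * ((x - lambda s) * (x + lambda (qpair s))).
Proof.
have A_s := A_neq0 s.
transitivity (A s * x ^+ 2 + A s * x * (lambda (qpair s) - lambda s)
              - A s * (lambda s * lambda (qpair s))); last by ring.
by rewrite lam_mul_qpair lam_qpair /lam; field.
Qed.

Definition nu s : R[i] := (1 - b * d / k * w s) / (a * c - k * w s).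

Lemma nu_mul_qpair s : nu s * nu (qpair s) = C s / A s.
Proof.
by rewrite /nu (qroot_qpair n rho n_gt0 R) mulf_div /qroot -Ccoef_cis // -Acoef_cis.
Qed.

Lemma lam_fixed s : qpair s = s -> lambda s = (-1) ^+ (qnum rho s == 0%N) * nu s.
Proof.
move=> fixed_s; have := A_neq0 s; rewrite /lam /nu /Bcoef Acoef_cis /qroot.
have [qnumE | qnumE] := qpair_fixed n rho n_gt0 s fixed_s.
  have q0 : q s = 0 by rewrite /qang qnumE mulr0n mulr0 mul0r.
  rewrite (sD_0 s) ?(dvdn_qnum n rho n_gt0) ?qnumE //= q0 conj_cis oppr0 cis0 sin0.
  rewrite mulf_eq0 negb_or mulr1 => /andP[ack_neq0 _].
  by rewrite (_ : 0%:C = 0) // expr1; field; rewrite ack_neq0 k_neq0.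
have qpi : q s = pi by rewrite /qang qnumE mulfK // pnatr_eq0 -lt0n.
rewrite (sD_pi s) ?(qnum_eq_n_mod n rho n_gt0) // qpi cis_pi sinpi rmorphN1.
rewrite qnumE (gtn_eqF n_gt0) mulf_eq0 negb_or mulrN1 opprK => /andP[ack_neq0 _].
by rewrite (_ : 0%:C = 0) // expr0; field; rewrite ack_neq0 k_neq0.
Qed.

Lemma prod_Acoef : \prod_(s < n) A s = lead ^+ 2.
Proof.
rewrite (eq_bigr _ (fun s _ => Acoef_cis R a c k (q s))) big_split /=.
by rewrite prod_sub_qroot // prod_sub_conj_qroot // expr2 -!exprMn.
Qed.

Lemma prod_nu :
  \prod_(s < n) nu s = (1 + (-1) ^+ rho * b ^+ n * d ^+ n / k ^+ n) / lead.
Proof.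
rewrite prodf_div !prod_sub_qroot //.
by rewrite expr1n !exprMn exprVn !mulrA.
Qed.

Lemma prod_lam : \prod_(s < n) lambda s = (-1) ^+ rho * \prod_(s < n) nu s.
Proof.
rewrite (prod_involution (qpairK n rho n_gt0) _ lam_fixed).
  by rewrite prod_qpair_fixed_sign.
by move=> s; rewrite lam_mul_qpair nu_mul_qpair.
Qed.

Lemma sign_prod_quadratic x :
  (-1) ^+ n * \prod_(s < n) (A s * x ^+ 2 - C s + 2%:R * 'i * B s * x)
  = lead ^+ 2 * \prod_(s < n) (lambda s ^+ 2 - x ^+ 2).
Proof.
rewrite (eq_bigr _ (fun s _ => quadratic_lam_factor s x)) big_split prod_Acoef big_split.
have -> : \prod_(s < n) (x + lambda (qpair s)) = \prod_(s < n) (x + lambda s).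
  by rewrite [RHS](reindex_inj (inv_inj (qpairK n rho n_gt0))).
rewrite -big_split mulrCA -prodrN_ord; congr (_ * _).
by apply: eq_bigr => s _ /=; ring.
Qed.

End QuadraticRoots.

Theorem mainTheorem8 (R : realType) (n : nat) (rho : bool)
  (a b c d k : R[i]) (t : {poly R[i]}) (sD : 'I_n -> R[i]) :
  (0 < n)%N ->
  a != 0 -> b != 0 -> c != 0 -> d != 0 -> k != 0 ->
  a ^+ n * c ^+ n + (-1) ^+ rho * k ^+ n != 0 ->
  (size t <= n.+1)%N ->
  t.[0] = 1 + (-1) ^+ rho * b ^+ n * d ^+ n / k ^+ n ->
  t`_n = a ^+ n * c ^+ n + (-1) ^+ rho * k ^+ n ->
  (forall x : R[i],
     t.[x] * t.[- x] =
       (-1) ^+ rho * (zfun n a b c d k x + zfun n a b c d k (- x))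
       + \tr ((Lmat a b c d k (x ^+ 2)) ^+ n)) ->
  (* the branch of sqrt D(q_s): *)
  (forall s : 'I_n, sD s ^+ 2 = Dcoef a b c d k (qang n rho s)) ->
  (forall s : 'I_n, ((2 * n) %| qnum rho s)%N ->
     sD s = (k - a * c) * (1 - b * d / k)) ->
  (forall s : 'I_n, qnum rho s = n %[mod 2 * n] ->
     sD s = (k + a * c) * (1 + b * d / k)) ->
  (forall s s' : 'I_n,
     ~~ ((2 * n) %| qnum rho s)%N -> qnum rho s <> n %[mod 2 * n] ->
     ((2 * n) %| qnum rho s + qnum rho s')%N -> sD s = sD s') ->
  (forall x : R[i],
     t.[x] * t.[- x] =
       (-1) ^+ n * \prod_(s < n)
         (Acoef a c k (qang n rho s) * x ^+ 2 - Ccoef b d k (qang n rho s)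
          + 2%:R * 'i * Bcoef a b c d (qang n rho s) * x))
  /\
  ((forall s : 'I_n, Acoef a c k (qang n rho s) != 0) ->
   exists sigma : 'I_n -> bool,
     \prod_(s < n) (-1) ^+ (sigma s) = (-1) ^+ rho :> R[i] /\
     forall x : R[i],
       t.[x] = (a ^+ n * c ^+ n + (-1) ^+ rho * k ^+ n) *
               \prod_(s < n)
                 (x + (-1) ^+ (sigma s) * lam a b c d k (qang n rho s) (sD s))).
Proof.
move=> n_gt0 _ _ _ _ k_neq0 lead_neq0 size_le t0E tnE ttE sD_sqr sD_0 sD_pi sD_even.
set lead := a ^+ n * c ^+ n + (-1) ^+ rho * k ^+ n in lead_neq0 tnE *.
have tt_quadratic x : t.[x] * t.[- x] = (-1) ^+ n * \prod_(s < n)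
    (Acoef a c k (qang n rho s) * x ^+ 2 - Ccoef b d k (qang n rho s)
     + 2%:R * 'i * Bcoef a b c d (qang n rho s) * x).
  by rewrite ttE zfun_add_trace_Lmat_eq_prod.
split=> // A_neq0.
have size_t : size t = n.+1.
  apply/eqP; rewrite eqn_leq size_le /= ltnNge.
  by apply: contra lead_neq0 => size_t; rewrite -tnE nth_default.
have lead_t : lead_coef t = lead by rewrite lead_coefE size_t.
have ttE' x : t.[x] * t.[- x] = lead_coef t ^+ 2
    * \prod_(s < n) (lam a b c d k (qang n rho s) (sD s) ^+ 2 - x ^+ 2).
  by rewrite tt_quadratic (sign_prod_quadratic _ _ sD_sqr) // lead_t.
have [sg tE] := exists_signed_factorization size_t ttE'.
have signsE : \prod_(s < n) (-1) ^+ sg s * \prod_(s < n) lam a b c d k (qang n rho s) (sD s)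
    = (-1) ^+ rho * \prod_(s < n) lam a b c d k (qang n rho s) (sD s).
  rewrite [in RHS]prod_lam // prod_nu // mulrA -expr2 sqrr_sign mul1r.
  apply: (mulfI lead_neq0); rewrite [RHS]mulrC divfK // -t0E tE lead_t -big_split.
  by congr (_ * _); apply: eq_bigr => s _; rewrite add0r.
have [sg' [sg'E sg'_lam]] := exists_signs_prod signsE.
exists sg'; split=> // x; rewrite tE lead_t; congr (_ * _).
by apply: eq_bigr => s _; rewrite sg'_lam.
Qed.
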